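(* Let $K\geq 2$ be an integer, let $\mathcal{X}_1,\dots,\mathcal{X}_K$ be Euclidean (finite-dimensional real inner product) spaces with inner products $\langle\cdot,\cdot\rangle_k$ and norms $\Vert\cdot\Vert_k$, and let $X_1,\dots,X_K$ be random variables on a probability space $(\Omega,\mathcal{A},P)$ with $X_k$ valued in $\mathcal{X}_k$, $\mathbb{E}(\Vert X_k\Vert_k^2)<+\infty$ and $\mathbb{E}(X_k)=0$ for every $k$. For $(k,\ell)\in\{1,\dots,K\}^2$ let $V_{k\ell}=\mathbb{E}(X_\ell\otimes X_k)$ and $V_k=V_{kk}$, and assume each $V_k$ is invertible. Let $\mathcal{X}=\mathcal{X}_1\times\cdots\times\mathcal{X}_K$ with inner product $\langle\alpha,\beta\rangle_{\mathcal{X}}=\sum_{k=1}^K\langle\alpha_k,\beta_k\rangle_k$, let $q=\dim\mathcal{X}$, and define the operators on $\mathcal{X}$ \[ \Phi=\sum_{k=1}^K\tau_k^\ast V_k\tau_k,\qquad \Psi=\sum_{k=1}^K\sum_{\ell=1,\ \ell\neq k}^K\tau_k^\ast V_{k\ell}\tau_\ell,\qquad T=\Phi^{-1/2}\Psi\Phi^{-1/2}. \] Let $\rho_1\geq\rho_2\geq\cdots\geq\rho_q$ be the eigenvalues of the self-adjoint operator $T$ (counted with multiplicity). Then: (i) for every $j\in\{1,\dots,q\}$, $-1\leq\rho_j\leq K(K-1)$; (ii) $\rho_j=0$ for all $j\in\{1,\dots,q\}$ if and only if $V_{k\ell}=0$ for all $(k,\ell)\in\{1,\dots,K\}^2$ with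 $k\neq\ell$.
   Context: For vectors $x,y$ in Euclidean spaces, $x\otimes y$ denotes the linear map $h\mapsto\langle x,h\rangle y$, so $V_{k\ell}=\mathbb{E}(X_\ell\otimes X_k)$ is a linear map from $\mathcal{X}_\ell$ to $\mathcal{X}_k$ with $\langle a,V_{k\ell}b\rangle_k=\mathbb{E}(\langle a,X_k\rangle_k\langle b,X_\ell\rangle_\ell)$. $\tau_k:\mathcal{X}\to\mathcal{X}_k$ is the canonical projection $\alpha\mapsto\alpha_k$, and its adjoint $\tau_k^\ast:\mathcal{X}_k\to\mathcal{X}$ maps $t$ to the element of $\mathcal{X}$ whose $k$-th component is $t$ and all other components are $0$. $\Phi$ is self-adjoint, positive and invertible, and $\Phi^{-1/2}=\sum_k\tau_k^\ast V_k^{-1/2}\tau_k$. The $\rho_j$ are called the canonical coefficients of the multiple-set linear canonical analysis of $(X_1,\dots,X_K)$. *)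

From HB Require Import structures.
From mathcomp Require Import all_boot all_order all_algebra.
From mathcomp Require Import all_classical all_reals all_analysis.
Set Implicit Arguments. Unset Strict Implicit. Unset Printing Implicit Defensive.
Import Order.TTheory GRing.Theory Num.Theory.
Local Open Scope ring_scope.

Definition posdef (R : realType) (n : nat) (A : 'M[R]_n) : Prop :=
  A^T = A /\ forall x : 'cV[R]_n, x != 0 -> 0 < (x^T *m A *m x) 0 0.

(* A^{-1/2}: the (unique) symmetric positive definite S with S S = A^{-1},
   chosen by classical description; 0 if no such S exists. *)
Definition invsqrtmx (R : realType) (n : nat) (A : 'M[R]_n) : 'M[R]_n :=
  match pselect (exists S : 'M[R]_n, posdef S /\ S *m S = invmx A) with
  | left h => projT1 (cid h)
  | right _ => 0
  end.

(* Cross-covariance V_{kl} = E(X_l (x) X_k), as a d_k x d_l matrix: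
   (V_{kl})_{ij} = E(X_{k,i} X_{l,j}), X_{k,i} the i-th coordinate of X_k. *)
Definition covmx d (T : measurableType d) (R : realType) (P : probability T R)
  (K : nat) (dim : 'I_K -> nat) (X : forall k : 'I_K, 'I_(dim k) -> T -> R)
  (k l : 'I_K) : 'M[R]_(dim k, dim l) :=
  \matrix_(i, j) fine ('E_P[(fun w => X k i w * X l j w)%R])%E.

Definition Phi_op (R : realType) (K : nat) (dim : 'I_K -> nat)
  (V : forall k l : 'I_K, 'M[R]_(dim k, dim l)) : 'M[R]_(\sum_k dim k) :=
  \mxdiag_k V k k.

Definition Psi_op (R : realType) (K : nat) (dim : 'I_K -> nat)
  (V : forall k l : 'I_K, 'M[R]_(dim k, dim l)) : 'M[R]_(\sum_k dim k) :=
  \mxblock_(k, l) (if k == l then 0 else V k l).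

Definition Phi_invsqrt (R : realType) (K : nat) (dim : 'I_K -> nat)
  (V : forall k l : 'I_K, 'M[R]_(dim k, dim l)) : 'M[R]_(\sum_k dim k) :=
  \mxdiag_k invsqrtmx (V k k).

Definition T_op (R : realType) (K : nat) (dim : 'I_K -> nat)
  (V : forall k l : 'I_K, 'M[R]_(dim k, dim l)) : 'M[R]_(\sum_k dim k) :=
  Phi_invsqrt V *m Psi_op V *m Phi_invsqrt V.

From HB Require Import structures.
From mathcomp Require Import all_boot all_order all_algebra.
From mathcomp Require Import all_classical all_reals all_analysis.
From mathcomp Require Import complex ring lra.
Set Implicit Arguments. Unset Strict Implicit. Unset Printing Implicit Defensive.
Import Order.TTheory GRing.Theory Num.Theory.
Local Open Scope ring_scope.

(* For an eigenvector v of the symmetric matrix T with eigenvalue rho, put w := v Phi^{-1/2}: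
   then w Phi w^T = |v|^2 > 0 and w Psi w^T = rho |v|^2.  Split w into blocks w_k and let
   x_kl := w_k V_kl w_l^T.  The joint covariance (V_kl) is a Gram matrix, hence positive
   semidefinite, so sum_k x_kk + sum_{k<>l} x_kl >= 0, i.e. rho >= -1; and 2 x_kl <= x_kk + x_ll
   bounds each of the K(K-1) off-diagonal terms by sum_k x_kk, i.e. rho <= K(K-1).  All rho_j
   vanish iff char_poly T = X^q, iff the symmetric matrix T is nilpotent, iff T = 0, iff Psi = 0.
   Phi^{-1/2} exists because every V_k is positive definite: by the spectral theorem, a
   polynomial in V_k is a positive definite square root of V_k^{-1}. *)

Lemma poly_interpolation (F : fieldType) (s : seq F) (y : F -> F) : uniq s ->
  exists q : {poly F}, forall x, x \in s -> q.[x] = y x.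
Proof.
elim: s => [|a s IH] /=; first by exists 0.
move=> /andP[a_notin_s uniq_s]; have [q qE] := IH uniq_s.
pose w := \prod_(z <- s) ('X - z%:P).
have wa_neq0 : w.[a] != 0.
  rewrite /w horner_prod prodf_seq_neq0; apply/allP => z zs /=.
  by rewrite hornerXsubC subr_eq0; apply: contraNneq a_notin_s => ->.
exists (q + ((y a - q.[a]) / w.[a]) *: w) => x; rewrite inE => /orP[/eqP->|xs].
  by rewrite hornerD hornerZ divfK // addrC subrK.
have /eqP wx0 : root w x by rewrite root_prod_XsubC.
by rewrite hornerD hornerZ wx0 mulr0 addr0 qE.
Qed.

Lemma trmx_horner_mx (R : comNzRingType) n (A : 'M[R]_n.+1) p :
  (horner_mx A p)^T = horner_mx A^T p.
Proof.
elim/poly_ind: p => [|p c IH]; first by rewrite !rmorph0 trmx0.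
rewrite !(rmorphD, rmorphM) /= !horner_mx_X !horner_mx_C raddfD /= tr_scalar_mx.
congr (_ + _); rewrite [_ * _]/(_ *m _) trmx_mul IH.
by apply: comm_mx_horner; exact: comm_mx_refl.
Qed.

Lemma bilin_trmx (R : comPzRingType) m n (x : 'rV[R]_m) (M : 'M[R]_(m, n))
    (y : 'rV[R]_n) :
  (x *m M *m y^T) 0 0 = (y *m M^T *m x^T) 0 0.
Proof.
transitivity ((x *m M *m y^T)^T 0 0); first by rewrite [RHS]mxE.
by rewrite !trmx_mul trmxK mulmxA.
Qed.

Section RealDomain.
Variable R : realDomainType.

Lemma trmx_mul_self_eq0 m n (A : 'M[R]_(m, n)) : A^T *m A = 0 -> A = 0.
Proof.
move=> /matrixP AA0; apply/matrixP => i j; rewrite mxE.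
move: (AA0 j j); rewrite !mxE => /eqP.
rewrite psumr_eq0 => [/allP/(_ i (mem_index_enum _))|k _]; rewrite mxE -expr2.
  by rewrite sqrf_eq0 => /implyP/(_ isT)/eqP.
exact: sqr_ge0.
Qed.

Lemma mulmx_trmx_gt0 n (z : 'rV[R]_n) : z != 0 -> 0 < (z *m z^T) 0 0.
Proof.
move=> z_neq0; rewrite lt_def; apply/andP; split.
  apply: contraNneq z_neq0 => zz0; rewrite -trmx_eq0; apply/eqP/trmx_mul_self_eq0.
  by apply/matrixP => i j; rewrite !ord1 trmxK zz0 mxE.
rewrite mxE; apply: sumr_ge0 => j _; rewrite mxE -expr2; exact: sqr_ge0.
Qed.

Lemma trmxX_sym n (B : 'M[R]_n) k : B^T = B -> (B ^+ k)^T = B ^+ k.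
Proof.
move=> B_sym; elim: k => [|k IH]; first by rewrite expr0 trmx1.
by rewrite {1}exprS [_ * _]/(_ *m _) trmx_mul IH B_sym exprSr.
Qed.

Lemma sym_nilpotent_eq0 n (B : 'M[R]_n) k : B^T = B -> B ^+ k = 0 -> B = 0.
Proof.
move=> B_sym; elim: k => [|k IH] Bk0; first by rewrite -[B]mulr1 -(expr0 B) Bk0 mulr0.
case: k IH Bk0 => [_|k IH Bk0]; first by rewrite expr1.
apply: IH; apply: trmx_mul_self_eq0; rewrite trmxX_sym //.
by rewrite -[_ *m _]/(_ * _) -exprD -addSnnS exprD Bk0 mul0r.
Qed.

Lemma char_poly0 n : char_poly (0 : 'M[R]_n) = 'X^n.
Proof.
rewrite char_poly_trig ?mx0_is_trig // -[n in 'X^n]card_ord -prodr_const.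
by apply: eq_bigr => i _; rewrite mxE subr0.
Qed.

Lemma sym_char_poly_Xn n (B : 'M[R]_n) : B^T = B -> (char_poly B == 'X^n) = (B == 0).
Proof.
move=> B_sym; apply/eqP/eqP => [|->]; last exact: char_poly0.
case: n B B_sym => [|n] B B_sym charB; first by rewrite thinmx0.
apply: (sym_nilpotent_eq0 (k := n.+1)) => //.
by have := Cayley_Hamilton B; rewrite charB rmorphXn /= horner_mx_X.
Qed.

Lemma prod_XsubC_Xn n (rho : 'I_n -> R) :
  (\prod_j ('X - (rho j)%:P) == 'X^n) = [forall j, rho j == 0].
Proof.
apply/eqP/forallP => [rhoX j|rho0]; last first.
  rewrite -[n in 'X^n]card_ord -prodr_const.
  by apply: eq_bigr => j _; rewrite (eqP (rho0 j)) subr0.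
have /eqP := congr1 (horner^~ (rho j)) rhoX.
rewrite horner_prod (bigD1 j) //= hornerXsubC subrr mul0r hornerXn eq_sym.
by rewrite expf_eq0 => /andP[_].
Qed.
End RealDomain.

Lemma quadratic_ge0_lin_eq0 (R : realFieldType) (b c : R) :
  (forall s, 0 <= 2 * s * b + s ^+ 2 * c) -> b = 0.
Proof.
move=> ge0; pose t := `|c| + 1; have t_gt0 : 0 < t by rewrite ltr_pwDr ?normr_ge0.
pose s := - b / t; have bE : b = - (s * t) by rewrite /s !mulNr opprK divfK ?gt_eqF.
suff s0 : s = 0 by rewrite bE s0 mul0r oppr0.
have ct : c - 2 * t < 0 by rewrite /t; have := ler_norm c; have := normr_ge0 c; lra.
have : 0 <= s ^+ 2 * (c - 2 * t) by have := ge0 s; rewrite bE; congr (_ <= _); ring.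
rewrite nmulr_lge0 // => s2_le0.
by apply/eqP; rewrite -sqrf_eq0 eq_le s2_le0 sqr_ge0.
Qed.

Lemma sqrt_invmx_conj (R : comUnitRingType) n (A U : 'M[R]_n) : U *m U = invmx A -> A \in unitmx ->
  U *m A *m U = 1%:M.
Proof.
move=> UU A_unit; have [U_unit _] : U \in unitmx /\ U *m A \in unitmx.
  by apply: mulmx1_unit; rewrite mulmxA UU mulVmx.
apply: (can_inj (mulKmx U_unit)).
by rewrite !mulmxA UU mulVmx // mul1mx mulmx1.
Qed.
Section PositiveDefinite.
Variable R : realType.

Lemma symmx_spectrum n (A : 'M[R]_n.+1) : A^T = A ->
  exists mu : 'I_n.+1 -> R, (forall i, eigenvalue A (mu i)) /\
    forall g : {poly R}, (forall i, g.[mu i] = 0) -> horner_mx A g = 0.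
Proof.
move=> A_sym; pose Ac := map_mx (real_complex R) A.
have Ac_herm : Ac \is hermsymmx.
  apply: realsym_hermsym.
    by apply/is_hermitianmxP; rewrite expr0 scale1r map_mx_id // map_trmx A_sym.
  by apply/mxOverP => i j; rewrite mxE; apply/complex_realP; eexists.
pose P := spectralmx Ac; pose d := spectral_diag Ac.
have AcE : Ac = invmx P *m diag_mx d *m P.
  exact/orthomx_spectralP/hermitian_normalmx.
have P_unit : P \in unitmx := spectral_unit Ac.
have dE i : d 0 i = (complex.Re (d 0 i))%:C%C.
  by have /mxOverP/(_ 0 i)/RRe_real := hermitian_spectral_diag_real Ac_herm.
exists (fun i => complex.Re (d 0 i)); split => [i|g g_mu].
  have : eigenvalue Ac (d 0 i).
    apply/eigenvalueP; exists (row i P).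
      rewrite -row_mul.
      have -> : P *m Ac = diag_mx d *m P by rewrite AcE !mulmxA mulmxV // mul1mx.
      by rewrite row_mul row_diag_mx -scalemxAl -rowE.
    apply: contra_neq (oner_neq0 R[i]) => Pi0.
    have /rowP/(_ i) := congr1 (mulmx^~ (invmx P)) (esym Pi0).
    by rewrite -row_mul mulmxV // mul0mx !mxE eqxx.
  by rewrite !eigenvalue_root_char /Ac -map_char_poly {1}dE fmorph_root.
apply: (@map_mx_inj _ _ (real_complex R)).
rewrite map_mx0 map_horner_mx -/Ac AcE horner_mx_uconjC // horner_mx_diag.
have -> : map_mx (horner (map_poly (real_complex R) g)) d = 0.
  by apply/rowP => i; rewrite !mxE dE horner_map /= g_mu.
by rewrite linear0 mulmx0 mul0mx.
Qed.

Lemma posdef_eigenvalue_gt0 n (A : 'M[R]_n) a : posdef A -> eigenvalue A a -> 0 < a.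
Proof.
move=> [_ A_pos] /eigenvalueP[v vA v_neq0].
have := A_pos v^T; rewrite trmx_eq0 trmxK vA -scalemxAl mxE => /(_ v_neq0).
by rewrite pmulr_lgt0 // mulmx_trmx_gt0.
Qed.

Lemma posdef_invsqrt_exists n (A : 'M[R]_n) : posdef A ->
  exists S, posdef S /\ S *m S = invmx A.
Proof.
case: n A => [|n] A A_pd.
  by exists 0; split; [split=> [|x]; rewrite ?trmx0 // [x]flatmx0 eqxx | rewrite !thinmx0].
have [mu [mu_eig mu_ann]] := symmx_spectrum A_pd.1.
have mu_gt0 i : 0 < mu i := posdef_eigenvalue_gt0 A_pd (mu_eig i).
(* Q = A^(-1/4), so that S = Q^2 is visibly positive definite. *)
have [q qE] := poly_interpolation (fun x => (Num.sqrt (Num.sqrt x))^-1) (undup_uniq (codom mu)).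
pose Q := horner_mx A q.
have QA : Q ^+ 4 * A = 1.
  apply/eqP; rewrite -subr_eq0; apply/eqP.
  have := mu_ann (q ^+ 4 * 'X - 1).
  rewrite rmorphB rmorphM rmorphXn /= horner_mx_X rmorph1; apply=> i.
  rewrite !hornerE qE ?mem_undup ?codom_f // exprVn -[4%N]/(2 * 2)%N exprM.
  by rewrite !sqr_sqrtr ?sqrtr_ge0 ?ltW // mulVf ?subrr ?gt_eqF.
have Q_sym : Q^T = Q by rewrite trmx_horner_mx A_pd.1.
have [Q_unit _] : Q \in unitmx /\ Q ^+ 3 * A \in unitmx.
  by apply: mulmx1_unit; rewrite -[_ *m _]/(_ * _) mulrA -exprS.
have [_ A_unit] : Q ^+ 4 \in unitmx /\ A \in unitmx by apply: mulmx1_unit.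
exists (Q *m Q); split.
  split=> [|x x_neq0]; first by rewrite trmx_mul Q_sym.
  have -> : x^T *m (Q *m Q) *m x = (x^T *m Q) *m (x^T *m Q)^T.
    by rewrite trmx_mul Q_sym trmxK !mulmxA.
  apply: mulmx_trmx_gt0; apply: contra_neq x_neq0 => xQ0.
  by apply: trmx_inj; rewrite trmx0 -(mulmxK Q_unit x^T) xQ0 mul0mx.
rewrite -[invmx A]mul1mx; apply: (canRL (mulmxK A_unit)).
by rewrite -[1%:M]QA -[4%N]/(2 + 2)%N exprD expr2.
Qed.

Lemma invsqrtmxP n (A : 'M[R]_n) : posdef A ->
  posdef (invsqrtmx A) /\ invsqrtmx A *m invsqrtmx A = invmx A.
Proof.
move=> A_pd; rewrite /invsqrtmx; case: pselect => [h|]; first by case: (cid h).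
by have := posdef_invsqrt_exists A_pd.
Qed.

Lemma psd_unit_posdef n (A : 'M[R]_n) : A^T = A ->
  (forall x : 'rV_n, 0 <= (x *m A *m x^T) 0 0) -> A \in unitmx -> posdef A.
Proof.
move=> A_sym A_psd A_unit; split=> // x x_neq0; set z := x^T.
rewrite -[x in _ *m x]trmxK -/z lt_def A_psd andbT.
apply: contra_neq x_neq0 => zAz0; pose y := z *m A.
(* z is a minimum of the nonnegative form, so its gradient [z *m A] vanishes. *)
have yy0 : (y *m y^T) 0 0 = 0.
  apply: (quadratic_ge0_lin_eq0 (c := (y *m A *m y^T) 0 0)) => s.
  have := A_psd (z + s *: y).
  rewrite raddfD /= linearZ /= !(mulmxDl, mulmxDr) -!scalemxAl -!scalemxAr.
  rewrite ![(_ + _ : 'M[_]_(_, _)) _ _]mxE ![(_ *: _ : 'M[_]_(_, _)) _ _]mxE.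
  rewrite (bilin_trmx y A z) A_sym zAz0 -/y => /le_trans; apply.
  by rewrite le_eqVlt; apply/orP; left; apply/eqP; ring.
have y0 : y = 0 by apply: contra_eq yy0 => /mulmx_trmx_gt0/gt_eqF ->.
by apply: trmx_inj; rewrite trmx0 -(mulmxK A_unit x^T) -/z -/y y0 mul0mx.
Qed.

End PositiveDefinite.

Section BlockForms.
Variables (R : comPzRingType) (p : nat) (p_ : 'I_p -> nat).

Lemma mul_mxdiag (A B : forall i, 'M[R]_(p_ i)) :
  \mxdiag_i A i *m \mxdiag_i B i = \mxdiag_i (A i *m B i).
Proof.
rewrite [X in X *m _]/mxdiag mul_mxblock_mxdiag /mxdiag; apply: eq_mxblock => i j.
by case: eqVneq => [<-|_]; rewrite ?conform_mx_id ?mul0mx.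
Qed.

Lemma bilin_mxblock (w : 'rV[R]_(\sum_i p_ i)) (B : forall i j, 'M[R]_(p_ i, p_ j)) :
  (w *m \mxblock_(i, j) B i j *m w^T) 0 0 =
  \sum_i \sum_j (submxrow w i *m B i j *m (submxrow w j)^T) 0 0.
Proof.
rewrite -[in LHS](submxrowK w) mul_mxrow_mxblock tr_mxrow mul_mxrow_mxcol summxE.
rewrite exchange_big; apply: eq_bigr => i _.
by rewrite mulmx_suml summxE; apply: eq_bigr.
Qed.

Lemma bilin_mxdiag (w : 'rV[R]_(\sum_i p_ i)) (D : forall i, 'M[R]_(p_ i)) :
  (w *m \mxdiag_i D i *m w^T) 0 0 =
  \sum_i (submxrow w i *m D i *m (submxrow w i)^T) 0 0.
Proof.
by rewrite -[in LHS](submxrowK w) mul_mxrow_mxdiag tr_mxrow mul_mxrow_mxcol summxE.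
Qed.

End BlockForms.

Lemma sum_diag_offdiag (R : nmodType) K (F : 'I_K -> 'I_K -> R) :
  \sum_k \sum_l F k l = \sum_k F k k + \sum_k \sum_l (if k == l then 0 else F k l).
Proof.
rewrite -big_split /=; apply: eq_bigr => k _.
rewrite (bigD1 k) //= [X in _ = _ + X](bigD1 k) //= eqxx add0r.
by congr (_ + _); apply: eq_bigr => l /negbTE; rewrite eq_sym => ->.
Qed.

Lemma sum_offdiag_const (R : pzSemiRingType) K (c : R) :
  \sum_(k < K) \sum_(l < K) (if k == l then 0 else c) = (K * (K - 1))%:R * c.
Proof.
under eq_bigr => k _.
  rewrite (bigD1 k) //= eqxx add0r.
  under eq_bigr => l lk do rewrite eq_sym (negbTE lk).
  rewrite sumr_const cardC1 card_ord.
  over.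
by rewrite sumr_const card_ord -mulrnA mulr_natl mulnC subn1.
Qed.

Lemma sum_supp_pair (R : nmodType) K (F : 'I_K -> R) k l :
  (forall m, m != k -> m != l -> F m = 0) ->
  \sum_m F m = F k + (if l == k then 0 else F l).
Proof.
move=> F0; rewrite (bigD1 k) //=; congr (_ + _); case: (eqVneq l k) => [lk|lk].
  by apply: big1 => m mk; apply: F0; rewrite ?lk.
rewrite (bigD1 l) ?lk //= big1 ?addr0 // => m /andP[mk ml]; exact: F0.
Qed.

Section BlockCovariance.
Variables (R : realType) (K : nat) (dim : 'I_K -> nat).
Variable V : forall k l : 'I_K, 'M[R]_(dim k, dim l).
Hypothesis V_sym : forall k l, (V k l)^T = V l k.
Hypothesis V_psd : forall u : forall k, 'rV[R]_(dim k),
  0 <= \sum_k \sum_l (u k *m V k l *m (u l)^T) 0 0.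

(* [conform_mx 0 x] is [x] itself at [m = k]: it only casts [x] to the type of block [m]. *)
Definition two_blocks k (x : 'rV[R]_(dim k)) l (y : 'rV[R]_(dim l)) m : 'rV[R]_(dim m) :=
  if m == k then conform_mx 0 x else if m == l then conform_mx 0 y else 0.

Lemma two_blocks_l k (x : 'rV[R]_(dim k)) l (y : 'rV[R]_(dim l)) : two_blocks x y k = x.
Proof. by rewrite /two_blocks eqxx conform_mx_id. Qed.

Lemma two_blocks_r k (x : 'rV[R]_(dim k)) l (y : 'rV[R]_(dim l)) : l != k -> two_blocks x y l = y.
Proof. by rewrite /two_blocks => /negbTE ->; rewrite eqxx conform_mx_id. Qed.

Lemma two_blocks_0 k (x : 'rV[R]_(dim k)) l (y : 'rV[R]_(dim l)) m :
  m != k -> m != l -> two_blocks x y m = 0.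
Proof. by rewrite /two_blocks => /negbTE -> /negbTE ->. Qed.

Lemma form_two_blocks k l (x : 'rV[R]_(dim k)) (y : 'rV[R]_(dim l)) :
  \sum_m \sum_n (two_blocks x y m *m V m n *m (two_blocks x y n)^T) 0 0 =
  (x *m V k k *m x^T) 0 0 +
  (if l == k then 0 else 2 * (x *m V k l *m y^T) 0 0 + (y *m V l l *m y^T) 0 0).
Proof.
rewrite (@sum_supp_pair _ _ _ k l) => [|m mk ml]; last first.
  by rewrite big1 // => n _; rewrite two_blocks_0 // !mul0mx mxE.
have vanish m n : n != k -> n != l ->
    (two_blocks x y m *m V m n *m (two_blocks x y n)^T) 0 0 = 0.
  by move=> nk nl; rewrite (@two_blocks_0 _ _ _ _ n) // trmx0 mulmx0 mxE.
rewrite !(sum_supp_pair (vanish _)) two_blocks_l.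
case: (eqVneq l k) => [lk|lk]; first by rewrite !addr0.
by rewrite two_blocks_r // (bilin_trmx y) V_sym; ring.
Qed.

Lemma diag_block_psd k (x : 'rV[R]_(dim k)) : 0 <= (x *m V k k *m x^T) 0 0.
Proof. by have := V_psd (two_blocks x (0 : 'rV_(dim k))); rewrite form_two_blocks eqxx addr0. Qed.

Lemma diag_block_posdef k : V k k \in unitmx -> posdef (V k k).
Proof. exact: psd_unit_posdef (V_sym k k) (@diag_block_psd k). Qed.

Lemma offdiag_block_le k l (x : 'rV[R]_(dim k)) (y : 'rV[R]_(dim l)) : k != l ->
  2 * (x *m V k l *m y^T) 0 0 <= (x *m V k k *m x^T) 0 0 + (y *m V l l *m y^T) 0 0.
Proof.
move=> kl; have := V_psd (two_blocks x (- y)); rewrite form_two_blocks eq_sym (negbTE kl).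
by rewrite raddfN /= !mulmxN !mulNmx opprK [(- _ : 'M[_]_(_, _)) _ _]mxE; lra.
Qed.

Hypothesis V_unit : forall k, V k k \in unitmx.

Lemma invsqrt_diag_blockP k :
  posdef (invsqrtmx (V k k)) /\ invsqrtmx (V k k) *m invsqrtmx (V k k) = invmx (V k k).
Proof. exact/invsqrtmxP/diag_block_posdef. Qed.

Lemma trmx_Phi_invsqrt : (Phi_invsqrt V)^T = Phi_invsqrt V.
Proof. by rewrite tr_mxdiag; apply: eq_mxdiag => k; case: (invsqrt_diag_blockP k) => -[]. Qed.

Lemma Phi_invsqrt_Phi : Phi_invsqrt V *m Phi_op V *m Phi_invsqrt V = 1%:M.
Proof.
rewrite !mul_mxdiag -(mxdiagZ 1); apply: eq_mxdiag => k.
exact: sqrt_invmx_conj (invsqrt_diag_blockP k).2 (V_unit k).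
Qed.

Lemma Phi_invsqrt_unit : Phi_invsqrt V \in unitmx.
Proof. by case/mulmx1_unit: Phi_invsqrt_Phi. Qed.

Lemma trmx_Psi_op : (Psi_op V)^T = Psi_op V.
Proof.
rewrite tr_mxblock; apply: eq_mxblock => k l.
by rewrite eq_sym; case: eqVneq => _; rewrite ?trmx0 ?V_sym.
Qed.

Lemma trmx_T_op : (T_op V)^T = T_op V.
Proof. by rewrite !trmx_mul trmx_Phi_invsqrt trmx_Psi_op mulmxA. Qed.

Lemma bilin_Psi_op (w : 'rV[R]_(\sum_k dim k)) : (w *m Psi_op V *m w^T) 0 0 =
  \sum_k \sum_l (if k == l then 0 else (submxrow w k *m V k l *m (submxrow w l)^T) 0 0).
Proof.
rewrite bilin_mxblock; apply: eq_bigr => k _; apply: eq_bigr => l _.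
by case: eqVneq => _ //; rewrite mulmx0 mul0mx mxE.
Qed.

Lemma bilin_Phi_Psi_ge0 (w : 'rV[R]_(\sum_k dim k)) :
  0 <= (w *m Phi_op V *m w^T) 0 0 + (w *m Psi_op V *m w^T) 0 0.
Proof. by rewrite bilin_mxdiag bilin_Psi_op -sum_diag_offdiag. Qed.

Lemma bilin_Psi_le (w : 'rV[R]_(\sum_k dim k)) :
  (w *m Psi_op V *m w^T) 0 0 <= (K * (K - 1))%:R * (w *m Phi_op V *m w^T) 0 0.
Proof.
rewrite bilin_Psi_op -sum_offdiag_const; apply: ler_sum => k _; apply: ler_sum => l _.
case: eqVneq => [//|kl]; rewrite [in X in _ <= X]bilin_mxdiag.
set u := submxrow w; pose q m := (u m *m V m m *m (u m)^T) 0 0.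
have q_le m : q m <= \sum_n q n.
  by rewrite (bigD1 m) //= lerDl sumr_ge0 // => n _; apply: diag_block_psd.
have := offdiag_block_le (u k) (u l) kl; rewrite -/(q k) -/(q l).
by have := q_le k; have := q_le l; rewrite /q; lra.
Qed.

Lemma T_op_eigenvalue_bounds a : eigenvalue (T_op V) a -> -1 <= a <= (K * (K - 1))%:R.
Proof.
move=> /eigenvalueP[v vT v_neq0]; have v_gt0 := mulmx_trmx_gt0 v_neq0.
set S := Phi_invsqrt V; pose w := v *m S.
have wPhi : (w *m Phi_op V *m w^T) 0 0 = (v *m v^T) 0 0.
  rewrite trmx_mul trmx_Phi_invsqrt.
  have -> : w *m Phi_op V *m (S *m v^T) = v *m (S *m Phi_op V *m S) *m v^T.
    by rewrite !mulmxA.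
  by rewrite Phi_invsqrt_Phi mulmx1.
have wPsi : (w *m Psi_op V *m w^T) 0 0 = a * (v *m v^T) 0 0.
  rewrite trmx_mul trmx_Phi_invsqrt.
  have -> : w *m Psi_op V *m (S *m v^T) = v *m T_op V *m v^T by rewrite !mulmxA.
  by rewrite vT -scalemxAl mxE.
apply/andP; split.
  have := bilin_Phi_Psi_ge0 w.
  rewrite wPhi wPsi -[X in X + _]mul1r -mulrDl pmulr_lge0 //; lra.
by have := bilin_Psi_le w; rewrite wPhi wPsi ler_pM2r.
Qed.

Lemma T_op_eq0 : T_op V = 0 <-> forall k l, k != l -> V k l = 0.
Proof.
have S_unit := Phi_invsqrt_unit.
have -> : T_op V = 0 <-> Psi_op V = 0.
  split=> [T0|Psi0]; last by rewrite /T_op Psi0 mulmx0 mul0mx.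
  have := congr1 (fun M => invmx (Phi_invsqrt V) *m M *m invmx (Phi_invsqrt V)) T0.
  by rewrite /= /T_op !mulmxA mulVmx // mul1mx mulmxK // mulmx0 mul0mx.
split=> [Psi0 k l kl|V0].
  have := mxblockK (fun k l => if k == l then 0 else V k l) k l.
  by rewrite (negbTE kl) -/(Psi_op V) Psi0 submxblock0.
rewrite -mxblock0 /Psi_op; apply: eq_mxblock => k l.
by case: eqVneq => // /V0.
Qed.
End BlockCovariance.

Lemma sum_sigT (R : nmodType) K (dim : 'I_K -> nat) (G : {k : 'I_K & 'I_(dim k)} -> R) :
  \sum_p G p = \sum_k \sum_(i < dim k) G (Tagged (fun k => 'I_(dim k)) i).
Proof. by symmetry; rewrite sig_big_dep; apply: eq_bigr => -[]. Qed.

Section Covariance.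
Variables (d : measure_display) (Omega : measurableType d) (R : realType).
Variable P : probability Omega R.

Lemma normrM_le_sqrD (x y : R) : `|x * y| <= x ^+ 2 + y ^+ 2.
Proof.
rewrite normrM -(real_normK (num_real x)) -(real_normK (num_real y)).
by have := normr_ge0 x; have := normr_ge0 y; nra.
Qed.

(* The double sum is the expectation of the square of [\sum_t a t * Z t]. *)
Lemma expectation_gram_ge0 (I : finType) (Z : I -> Omega -> R) (a : I -> R) :
  (forall t s, P.-integrable setT (fun w => (Z t w * Z s w)%:E)) ->
  0 <= \sum_t \sum_s a t * a s * fine ('E_P[fun w => (Z t w * Z s w)%R])%E.
Proof.
move=> iZ; have mT : measurable [set: Omega] := measurableT.
have pw w : (((\sum_t a t * Z t w) ^+ 2)%:E =
    \sum_t \sum_s ((a t * a s)%:E * (Z t w * Z s w)%:E))%E.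
  rewrite expr2 mulr_suml -sumEFin; apply: eq_bigr => t _.
  rewrite mulr_sumr -sumEFin; apply: eq_bigr => s _.
  by rewrite -EFinM mulrACA.
have sqrE : (\int[P]_w ((\sum_t a t * Z t w) ^+ 2)%:E =
    (\sum_t \sum_s a t * a s * fine ('E_P[fun w => (Z t w * Z s w)%R]))%:E)%E.
  under eq_integral => w _ do rewrite pw.
  rewrite integral_sum //; last first.
    by move=> t; apply: (integrable_sum mT) => s _; exact: (integrableZl mT).
  rewrite -sumEFin; apply: eq_bigr => t _.
  rewrite integral_sum //; last by move=> s; exact: (integrableZl mT).
  rewrite -sumEFin; apply: eq_bigr => s _.
  by rewrite integralZl // unlock [RHS]EFinM fineK // integrable_fin_num.
rewrite -lee_fin -sqrE; apply: integral_ge0 => w _; by rewrite lee_fin sqr_ge0.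
Qed.

Variables (K : nat) (dim : 'I_K -> nat) (X : forall k : 'I_K, 'I_(dim k) -> Omega -> R).
Arguments X : clear implicits.

Lemma covmx_sym k l : (covmx P X k l)^T = covmx P X l k.
Proof.
apply/matrixP => i j; rewrite !mxE; congr (fine _); congr expectation.
by apply: funext => w; rewrite mulrC.
Qed.

Hypothesis X_meas : forall k i, measurable_fun setT (X k i).
Hypothesis X_sq_int : forall k, P.-integrable setT (fun w => (\sum_(i < dim k) X k i w ^+ 2)%:E).

Lemma integrable_coord_mul k i l j : P.-integrable setT (fun w => (X k i w * X l j w)%:E).
Proof.
have mT : measurable [set: Omega] := measurableT.
have sq_le m n w : X m n w ^+ 2 <= \sum_(n' < dim m) X m n' w ^+ 2.
  by rewrite (bigD1 n) //= lerDl sumr_ge0 // => ? _; exact: sqr_ge0.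
apply: (le_integrable mT (g := fun w => ((\sum_(i < dim k) X k i w ^+ 2)%:E
    + (\sum_(j < dim l) X l j w ^+ 2)%:E)%E)).
- by apply/measurable_realfun.measurable_EFinP; apply: measurable_realfun.measurable_funM.
- move=> w _; rewrite -EFinD !abse_EFin lee_fin.
  apply: le_trans (normrM_le_sqrD _ _) (le_trans (lerD (sq_le k i w) (sq_le l j w)) _).
  by rewrite ler_norm.
- exact: (integrableD mT).
Qed.

Lemma covmx_psd (u : forall k, 'rV[R]_(dim k)) :
  0 <= \sum_k \sum_l (u k *m covmx P X k l *m (u l)^T) 0 0.
Proof.
have := @expectation_gram_ge0 _ (fun p : {k : 'I_K & 'I_(dim k)} => X (tag p) (tagged p))
  (fun p => u (tag p) 0 (tagged p)) (fun _ _ => integrable_coord_mul _ _).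
rewrite sum_sigT; under eq_bigr do under eq_bigr do rewrite sum_sigT.
move/le_trans; apply; rewrite le_eqVlt; apply/orP; left; apply/eqP.
apply: eq_bigr => k _; rewrite exchange_big /=; apply: eq_bigr => l _.
rewrite mxE exchange_big; apply: eq_bigr => j _ /=.
rewrite !mxE mulr_suml; apply: eq_bigr => i _; rewrite !mxE.
by rewrite mulrAC.
Qed.
End Covariance.

Theorem theorem2p2 (d : measure_display) (Omega : measurableType d)
  (R : realType) (P : probability Omega R)
  (K : nat) (dim : 'I_K -> nat)
  (X : forall k : 'I_K, 'I_(dim k) -> Omega -> R) :
  (2 <= K)%N ->
  (forall k i, measurable_fun setT (X k i)) ->
  (forall k, P.-integrable setT
               (fun w => (\sum_(i < dim k) X k i w ^+ 2)%:E)) ->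
  (forall k i, 'E_P[X k i]%E = 0%E) ->
  (forall k, covmx P X k k \in unitmx) ->
  forall rho : 'I_(\sum_k dim k) -> R,
    (forall j j' : 'I_(\sum_k dim k), (j <= j')%N -> rho j' <= rho j) ->
    char_poly (T_op (covmx P X)) = \prod_j ('X - (rho j)%:P) ->
    (forall j, -1 <= rho j <= (K * (K - 1))%:R) /\
    ((forall j, rho j = 0) <->
       (forall k l : 'I_K, k != l -> covmx P X k l = 0)).
Proof.
move=> _ X_meas X_sq_int _ V_unit rho _ charT.
have V_sym := covmx_sym P X; have V_psd := covmx_psd X_meas X_sq_int.
split=> [j|].
  apply: (T_op_eigenvalue_bounds V_sym V_psd V_unit).
  rewrite eigenvalue_root_char charT -(big_map rho predT (fun x => 'X - x%:P)).
  by rewrite root_prod_XsubC map_f ?mem_index_enum.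
rewrite -(T_op_eq0 V_sym V_psd V_unit); split=> [rho0|T0].
  apply/eqP; rewrite -sym_char_poly_Xn ?trmx_T_op // charT prod_XsubC_Xn.
  by apply/forallP => j; rewrite rho0.
move=> j; apply/eqP; move: j; apply/forallP.
by rewrite -prod_XsubC_Xn -charT sym_char_poly_Xn ?trmx_T_op ?T0.
Qed.
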